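(* Consider Method 1.3 (described in the context) for finding $p^*=\Pr(y,D)$, the Euclidean projection of a given point $y\in\mathbb{R}^n$ onto $D$. Suppose the method does not terminate. Then every limit point of the sequence $\{p_k\}_{k\in K}$ equals $p^*$; and if $\|p_{k+1}-y\|\ge\|p_k-y\|$ for all $k\in K$, then $p_k\to p^*$.
   Context: Setting: $D''\subset\mathbb{R}^n$ closed convex; $f_j$, $j\in J=\{1,\dots,m\}$, convex on $\mathbb{R}^n$ with $D_j=\{x:f_j(x)\le0\}$ having nonempty interior; $D'=\{x:f_j(x)\le0\ \forall j\}$; $D=D'\cap D''\ne\emptyset$. Notation: $K=\{0,1,\dots\}$, $F=\max_jf_j$, $D'_\varepsilon=\{x:F(x)\le\varepsilon\}$, $\Pr(y,S)$ is the projection of $y$ onto the closed convex set $S$, $W^1(x,D_j)=\{a:\|a\|=1,\ \langle a,z-x\rangle\le0\ \forall z\in D_j\}$. Method 1.3: choose $v^j\in\operatorname{int}D_j$, a sequence $\varepsilon_k>0$ with $\varepsilon_k\to0$, and a constant $q\ge1$; set $k=i=0$, $M_0=\mathbb{R}^n$, $y_0=\Pr(y,D'')$. Step 1: $J_i=\{j:y_i\notin D_j\}$; if empty, stop. Step 2: if $y_i\notin D'_{\varepsilon_k}$ set $Q_i=M_i$; otherwise set $i_k=i$, $p_k=y_{i_k}$, $Q_i=\mathbb{R}^n$, $k\leftarrow k+1$. Step 3: for $j\in J_i$ choose $z_i^j\in(v^j,y_i)$ with $z_i^j\notin\operatorname{int}D_j$ and $y_i+q_i^j(z_i^j-y_i)\in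 D_j$ for some $q_i^j\in[1,q]$; for $j\notin J_i$, $z_i^j=y_i$. Step 4: find $j_i\in J_i$ with $\|y_i-z_i^{j_i}\|=\max_{j\in J_i}\|y_i-z_i^j\|$. Step 5: choose $a_i\in W^1(z_i^{j_i},D_{j_i})$ and set $M_{i+1}=Q_i\cap\{x:\langle a_i,x-z_i^{j_i}\rangle\le0\}$. Step 6: $y_{i+1}=\Pr(y,M_{i+1}\cap D'')$; $i\leftarrow i+1$; go to Step 1. *)

(* R^n is represented by row vectors 'rV[R]_n,
   R : realType, with the (library) product topology, which coincides with
   the Euclidean topology; the Euclidean inner product / norm are defined below. *)
From HB Require Import structures.
From mathcomp Require Import all_boot all_order all_algebra.
From mathcomp Require Import all_classical all_reals all_analysis.
Set Implicit Arguments. Unset Strict Implicit. Unset Printing Implicit Defensive.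
Import Order.TTheory GRing.Theory Num.Theory.
Import numFieldNormedType.Exports.
Local Open Scope classical_set_scope.
Local Open Scope ring_scope.

Definition edot (R : realType) (n : nat) (u v : 'rV[R]_n) : R :=
  \sum_(i < n) u ord0 i * v ord0 i.
Definition enorm (R : realType) (n : nat) (u : 'rV[R]_n) : R :=
  Num.sqrt (edot u u).

Definition convex_setR (R : realType) (n : nat) (S : set 'rV[R]_n) : Prop :=
  forall x z (t : R), S x -> S z -> 0 <= t <= 1 -> S (t *: x + (1 - t) *: z).
Definition convex_funR (R : realType) (n : nat) (g : 'rV[R]_n -> R) : Prop :=
  forall x z (t : R), 0 <= t <= 1 ->
    g (t *: x + (1 - t) *: z) <= t * g x + (1 - t) * g z.

(* D_j = {x : f_j x <= 0};  D' = {x : f_j x <= 0 for all j};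
   D'_eps = {x : F x <= eps} with F = max_j f_j, i.e. {x : f_j x <= eps for all j} *)
Definition sublevel (R : realType) (n : nat) (g : 'rV[R]_n -> R) : set 'rV[R]_n :=
  [set x | g x <= 0].
Definition Dprime_eps (R : realType) (n m : nat) (f : 'I_m -> 'rV[R]_n -> R)
  (e : R) : set 'rV[R]_n := [set x | forall j, f j x <= e].
Definition Dprime (R : realType) (n m : nat) (f : 'I_m -> 'rV[R]_n -> R) :=
  Dprime_eps f 0.

Definition is_proj (R : realType) (n : nat) (y : 'rV[R]_n) (S : set 'rV[R]_n)
  (p : 'rV[R]_n) : Prop :=
  S p /\ forall z, S z -> enorm (y - p) <= enorm (y - z).

Definition W1 (R : realType) (n : nat) (x : 'rV[R]_n) (S : set 'rV[R]_n) :
  set 'rV[R]_n :=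
  [set a | enorm a = 1 /\ forall z, S z -> edot a (z - x) <= 0].

Definition open_seg (R : realType) (n : nat) (v w : 'rV[R]_n) : set 'rV[R]_n :=
  [set z | exists t : R, 0 < t < 1 /\ z = (1 - t) *: v + t *: w].

(* Each y_i is the projection of y onto the convex set M_i ∩ D'', which contains
   D, so |y_i - y| <= |p* - y|.  Between two resets of Step 2 these sets shrink,
   so by Pythagoras the squared steps |y_{i+1} - y_i|^2 sum to at most
   |p* - y|^2 and some step is small.  A small step forces the cut point
   z_i^{j_i} to be close to y_i, because the cut separates y_{i+1} from a ball
   around v^{j_i} inside D_{j_i}; so every violated D_j has a point close to y_i,
   and since a convex function is bounded on balls it cannot grow much over that
   distance: y_i lies in D'_{eps_k}, the reset happens, and p_k is defined for
   every k.  A limit point of (p_k) lies in D'' (closed), in D' (as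
   F(p_k) <= eps_k -> 0) and is not farther from y than p*, hence it is p*.
   Under monotonicity, Pythagoras in M_{i_k} ∩ D'' gives
   |p_k - p*|^2 <= |p* - y|^2 - |p_k - y|^2, which decreases with k and tends to
   0 along a subsequence, by compactness. *)

From HB Require Import structures.
From mathcomp Require Import all_boot all_order all_algebra.
From mathcomp Require Import all_classical all_reals all_analysis.
From mathcomp Require Import ring lra.
Import Order.TTheory GRing.Theory Num.Theory.
Import numFieldNormedType.Exports.
Local Open Scope classical_set_scope.
Local Open Scope ring_scope.

Local Notation sqdist u w := (edot (u - w) (u - w)).

Ltac row_ring := apply/rowP => ?; rewrite !mxE; ring.

Section EuclideanSpace.
Context {R : realType} {n : nat}.
Implicit Types (t : R) (a u v w x : 'rV[R]_n).

Lemma edotC u v : edot u v = edot v u.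
Proof. by apply: eq_bigr => i _; rewrite mulrC. Qed.

Lemma edotDl u w v : edot (u + w) v = edot u v + edot w v.
Proof. by rewrite /edot -big_split; apply: eq_bigr => i _; rewrite mxE mulrDl. Qed.

Lemma edotZl t u v : edot (t *: u) v = t * edot u v.
Proof. by rewrite /edot mulr_sumr; apply: eq_bigr => i _; rewrite mxE mulrA. Qed.

Lemma edotNl u v : edot (- u) v = - edot u v.
Proof. by rewrite -scaleN1r edotZl mulN1r. Qed.

Lemma edotBl u w v : edot (u - w) v = edot u v - edot w v.
Proof. by rewrite edotDl edotNl. Qed.

Lemma edotDr u w v : edot v (u + w) = edot v u + edot v w.
Proof. by rewrite edotC edotDl !(edotC v). Qed.

Lemma edotZr t u v : edot v (t *: u) = t * edot v u.
Proof. by rewrite edotC edotZl edotC. Qed.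

Lemma edotNr u v : edot v (- u) = - edot v u.
Proof. by rewrite edotC edotNl edotC. Qed.

Lemma edotBr u w v : edot v (u - w) = edot v u - edot v w.
Proof. by rewrite edotDr edotNr. Qed.

Lemma edot_coord_le u i : u ord0 i ^+ 2 <= edot u u.
Proof.
rewrite /edot (bigD1 i) //= -expr2 lerDl.
by apply: sumr_ge0 => j _; rewrite -expr2 sqr_ge0.
Qed.

Lemma edot_ge0 u : 0 <= edot u u.
Proof. by apply: sumr_ge0 => i _; rewrite -expr2 sqr_ge0. Qed.

Lemma edot_eq0 u : edot u u = 0 -> u = 0.
Proof.
move=> u0; apply/rowP => i; rewrite mxE; apply/eqP; rewrite -sqrf_eq0 eq_le sqr_ge0.
by rewrite -u0 edot_coord_le.
Qed.

Lemma enorm_ge0 u : 0 <= enorm u.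
Proof. exact: sqrtr_ge0. Qed.

Lemma enorm_sqr u : enorm u ^+ 2 = edot u u.
Proof. by rewrite sqr_sqrtr // edot_ge0. Qed.

Lemma enorm_leE u w : (enorm u <= enorm w) = (edot u u <= edot w w).
Proof. by rewrite /enorm ler_sqrt // edot_ge0. Qed.

Lemma edot_sqrD u v : edot (u + v) (u + v) = edot u u + 2 * edot u v + edot v v.
Proof. rewrite !edotDl !edotDr (edotC v u); lra. Qed.

Lemma edot_sqrB u v : edot (u - v) (u - v) = edot u u - 2 * edot u v + edot v v.
Proof. rewrite !edotBl !edotBr (edotC v u); lra. Qed.

Lemma edot_sqrZ t u : edot (t *: u) (t *: u) = t ^+ 2 * edot u u.
Proof. by rewrite edotZl edotZr mulrA expr2. Qed.

Lemma sqdistC u v : sqdist u v = sqdist v u.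
Proof. by rewrite -opprB edotNl edotNr opprK. Qed.

Lemma sqdist_triangle u w x : sqdist u x <= 2 * sqdist u w + 2 * sqdist w x.
Proof.
have -> : u - x = (u - w) + (w - x) by row_ring.
rewrite edot_sqrD; have := edot_ge0 ((u - w) - (w - x)); rewrite edot_sqrB; lra.
Qed.

Lemma edot_le_amgm {t} u v : 0 < t -> 2 * edot u v <= t * edot u u + edot v v / t.
Proof.
move=> t0; have := edot_ge0 (t *: u - v); rewrite edot_sqrB edot_sqrZ edotZl => uv.
have tK : t * (edot v v / t) = edot v v by rewrite mulrC divfK ?gt_eqF.
rewrite -(ler_pM2l t0) mulrDr tK; nra.
Qed.

Lemma edot_unit_sqr_le {a} w : edot a a = 1 -> edot a w ^+ 2 <= edot w w.
Proof.
move=> a1; have := edot_ge0 (w - edot a w *: a).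
rewrite edot_sqrB edot_sqrZ edotZr a1 (edotC w a); lra.
Qed.

Lemma sqdist_near y (r : R) {e : R} : 0 < e -> exists2 d, 0 < d &
  forall x w, sqdist w y <= r -> sqdist x w < d -> sqdist x y <= sqdist w y + e.
Proof.
move=> e0; pose t := 2 * (`|r| + 1) / e.
have t0 : 0 < t by rewrite divr_gt0 // ltr_wpDl.
have te : t * e = 2 * (`|r| + 1) by rewrite /t divfK ?gt_eqF.
exists (e / (2 * (t + 1))) => [|x w wy xw]; first by rewrite divr_gt0 //; lra.
have -> : x - y = (x - w) + (w - y) by row_ring.
have xw' : sqdist x w * (2 * (t + 1)) < e by rewrite -ltr_pdivlMr //; lra.
have cross := edot_le_amgm (x - w) (w - y) t0.
have wy' : sqdist w y / t <= e / 2.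
  have et : e / 2 * t = `|r| + 1 by rewrite mulrC mulrA te; field.
  rewrite ler_pdivrMr // et; have := ler_norm r; lra.
rewrite (edot_sqrD (x - w)); have := edot_ge0 (x - w); nra.
Qed.

End EuclideanSpace.

Section Projection.
Context {R : realType} {n : nat}.
Implicit Types (u v w x y p : 'rV[R]_n) (C : set 'rV[R]_n).

Lemma convex_setI {C C'} : convex_setR C -> convex_setR C' -> convex_setR (C `&` C').
Proof. by move=> cC cC' x w t [Cx C'x] [Cw C'w] t01; split; [exact: cC | exact: cC']. Qed.

Lemma convex_halfspace (b c : 'rV[R]_n) : convex_setR [set x | edot b (x - c) <= 0].
Proof.
move=> x w t /= bx bw /andP[t0 t1].
have -> : t *: x + (1 - t) *: w - c = t *: (x - c) + (1 - t) *: (w - c) by row_ring.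
rewrite edotDr !edotZr; nra.
Qed.

Lemma convex_Dprime_eps {m} {f : 'I_m -> 'rV[R]_n -> R} {e} :
  (forall j, convex_funR (f j)) -> convex_setR (Dprime_eps f e).
Proof.
move=> cf x w t fx fw t01 j; have /andP[t0 t1] := t01.
apply: le_trans (cf j _ _ _ t01) _; have := fx j; have := fw j; nra.
Qed.

Lemma is_proj_variational {y C p w} :
  convex_setR C -> is_proj y C p -> C w -> edot (y - p) (w - p) <= 0.
Proof.
move=> cC [Cp p_min] Cw; rewrite leNgt; apply/negP => c0.
set c := edot (y - p) (w - p) in c0; set d := sqdist w p.
have d0 : 0 <= d := edot_ge0 (w - p).
(* for [t = c / (c + d)] the point [p + t (w - p)] of [C] is closer to [y] than [p] *)
set t := c / (c + d).
have t0 : 0 < t by rewrite divr_gt0 //; lra.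
have t1 : t <= 1 by rewrite ler_pdivrMr ?mul1r; lra.
have tcd : t * (c + d) = c by rewrite /t divfK // gt_eqF //; lra.
have := p_min _ (cC _ _ t Cw Cp (introT andP (conj (ltW t0) t1))).
rewrite enorm_leE.
have -> : y - (t *: w + (1 - t) *: p) = (y - p) - t *: (w - p) by row_ring.
rewrite (edot_sqrB (y - p)) edot_sqrZ edotZr -/c -/d; nra.
Qed.

Lemma is_proj_pythagoras {y C p w} : convex_setR C -> is_proj y C p -> C w ->
  sqdist w p <= sqdist w y - sqdist p y.
Proof.
move=> cC py Cw; have := is_proj_variational cC py Cw.
have -> : w - y = (w - p) + (p - y) by row_ring.
have -> : edot (y - p) (w - p) = - edot (w - p) (p - y) by rewrite edotC -edotNr opprB.
rewrite (edot_sqrD (w - p)); lra.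
Qed.

Lemma is_proj_sqdist_le {y C p w} : is_proj y C p -> C w -> sqdist p y <= sqdist w y.
Proof. by move=> [_ p_min] Cw; rewrite sqdistC [sqdist w y]sqdistC -enorm_leE p_min. Qed.

Lemma is_proj_eq {y C p x} : convex_setR C -> is_proj y C p -> C x ->
  sqdist x y <= sqdist p y -> x = p.
Proof.
move=> cC py Cx xy; have := is_proj_pythagoras cC py Cx.
move=> h; apply/eqP; rewrite -subr_eq0; apply/eqP/edot_eq0/le_anti.
by rewrite edot_ge0 andbT; lra.
Qed.

End Projection.

Section ConvexFunction.
Context {R : realType} {n : nat} {g : 'rV[R]_n -> R}.
Hypothesis convex_g : convex_funR g.

(* Induction on the number k of free coordinates: a point of the box with k+1
   free coordinates is the midpoint of a point of the box with k free
   coordinates and twice the radius, and of a point of the segment of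
   direction e_k, on which g is bounded by its values at the endpoints. *)
Lemma convex_fun_bounded_box (c : 'rV[R]_n) k {r : R} : 0 < r ->
  exists B : R, forall u : 'rV[R]_n,
    (forall i : 'I_n, (k <= i)%N -> u ord0 i = c ord0 i) ->
    (forall i, `|u ord0 i - c ord0 i| <= r) -> g u <= B.
Proof.
elim: k r => [|k IH] r r0.
  by exists (g c) => u uc _; have -> : u = c by apply/rowP => i; apply: uc.
have [kn|nk] := ltnP k n; last first.
  have [B HB] := IH r r0; exists B => u uc ur; apply: HB => // i ki.
  by move: (ltn_ord i); rewrite ltnNge (leq_trans nk ki).
set ko := Ordinal kn.
have r20 : 0 < 2 * r by rewrite mulr_gt0.
have [B' HB'] := IH (2 * r) r20.
set ek : 'rV[R]_n := \row_i ((i == ko)%:R).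
set Bp := g (c + (2 * r) *: ek); set Bm := g (c - (2 * r) *: ek).
exists (B' / 2 + (`|Bp| + `|Bm|) / 2) => u uc ur.
set u' : 'rV[R]_n := \row_i (if i == ko then c ord0 i else 2 * u ord0 i - c ord0 i).
have gu' : g u' <= B'.
  apply: HB' => i; rewrite mxE; case: eqP => [_|/eqP ne].
  - by [].
  - move=> ki; have ki' : (k < i)%N.
      by rewrite ltn_neqAle ki andbT; apply: contra ne => /eqP h; apply/eqP/val_inj.
    by rewrite uc //; ring.
  - by rewrite subrr normr0 ltW.
  - have -> : 2 * u ord0 i - c ord0 i - c ord0 i = 2 * (u ord0 i - c ord0 i) by ring.
    by rewrite normrM ger0_norm // ler_pM2l // ur.
set s := u ord0 ko - c ord0 ko.
have sr : `|s| <= r := ur ko.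
set w := c + (2 * s) *: ek.
have gw : g w <= `|Bp| + `|Bm|.
  set l := (s + r) / (2 * r).
  have l0 : 0 <= l by rewrite divr_ge0 ?(ltW r20) //; move: sr; rewrite ler_norml; lra.
  have l1 : l <= 1 by rewrite ler_pdivrMr // mul1r; move: sr; rewrite ler_norml; lra.
  have -> : w = l *: (c + (2 * r) *: ek) + (1 - l) *: (c - (2 * r) *: ek).
    by apply/rowP => i; rewrite !mxE /l; field; lra.
  apply: le_trans (convex_g _ _ _ (introT andP (conj l0 l1))) _.
  have := ler_norm Bp; have := ler_norm Bm; have := normr_ge0 Bp; have := normr_ge0 Bm.
  rewrite -/Bp -/Bm; nra.
have -> : u = (1 / 2) *: u' + (1 - 1 / 2) *: w.
  by apply/rowP => i; rewrite !mxE /s; case: eqP => [->|_]; rewrite ?mxE /=; field.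
have h0 : 0 <= 1 / 2 :> R by lra.
have h1 : 1 / 2 <= 1 :> R by lra.
by apply: le_trans (convex_g _ _ _ (introT andP (conj h0 h1))) _; lra.
Qed.

Lemma convex_fun_bounded_ball (c : 'rV[R]_n) (rho : R) :
  exists2 B : R, 0 <= B & forall u, sqdist u c <= rho -> g u <= B.
Proof.
have r0 : 0 < `|rho| + 1 by rewrite ltr_wpDl.
have [B HB] := convex_fun_bounded_box c n r0.
exists `|B| => // u uc; apply: le_trans (ler_norm B).
apply: HB => [i|i]; first by rewrite leqNgt ltn_ord.
have := edot_coord_le (u - c) i; rewrite !mxE => h.
have := ler_norm rho => rho_le; rewrite ler_norml; apply/andP; split; nra.
Qed.

(* x is a convex combination of w and of the point u at distance 1 from x on
   the ray from w through x, with weight |x - w| on u. *)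
Lemma convex_fun_le_near {c x w : 'rV[R]_n} {B rho : R} : 0 <= B ->
  (forall u, sqdist u c <= 2 * rho + 2 -> g u <= B) ->
  sqdist x c <= rho -> sqdist x w <= 1 ->
  g x <= Num.max (g w) 0 + enorm (x - w) * B.
Proof.
move=> B0 gB xc xw.
have l0 := enorm_ge0 (x - w); have l2 := enorm_sqr (x - w).
set l := enorm (x - w) in l0 l2 *.
have l1 : l <= 1 by nra.
have gw_max : g w <= Num.max (g w) 0 by rewrite le_max lexx.
have max_ge0 : 0 <= Num.max (g w) 0 by rewrite le_max lexx orbT.
have [l_eq0|l_neq0] := eqVneq l 0.
  have /eqP : x - w = 0 by apply: edot_eq0; rewrite -l2 l_eq0 expr2 mulr0.
  by rewrite subr_eq0 => /eqP ->; rewrite l_eq0 mul0r addr0.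
set u := x + ((1 - l) / l) *: (x - w).
have ux : sqdist u x <= 1.
  have -> : u - x = ((1 - l) / l) *: (x - w) by rewrite /u; row_ring.
  rewrite edot_sqrZ -l2 expr_div_n -mulrA mulVf ?mulr1 ?expf_neq0 //; nra.
have gu : g u <= B by apply/gB/(le_trans (sqdist_triangle _ x _)); lra.
have -> : x = l *: u + (1 - l) *: w by apply/rowP => i; rewrite /u !mxE; field.
apply: le_trans (convex_g _ _ _ (introT andP (conj l0 l1))) _; nra.
Qed.

Lemma convex_fun_near_le (c : 'rV[R]_n) (rho : R) {e : R} : 0 < e -> exists2 d, 0 < d &
  forall x w, sqdist x c <= rho -> sqdist x w <= d -> g x <= Num.max (g w) 0 + e.
Proof.
move=> e0; have [B B0 gB] := convex_fun_bounded_ball c (2 * rho + 2).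
have den0 : 0 < B ^+ 2 + e ^+ 2 + 1 by have := sqr_ge0 B; have := sqr_ge0 e; lra.
set d := e ^+ 2 / (B ^+ 2 + e ^+ 2 + 1).
have dE : d * (B ^+ 2 + e ^+ 2 + 1) = e ^+ 2 by rewrite /d divfK // gt_eqF.
have d0 : 0 < d by rewrite divr_gt0 // exprn_gt0.
exists d => // x w xc xw.
have xw1 : sqdist x w <= 1 by have := sqr_ge0 B; have := sqr_ge0 e; nra.
apply: le_trans (convex_fun_le_near B0 gB xc xw1) _; rewrite lerD2l.
have lB0 : 0 <= enorm (x - w) * B by rewrite mulr_ge0 ?enorm_ge0.
have sq : (enorm (x - w) * B) ^+ 2 <= e ^+ 2.
  rewrite exprMn enorm_sqr.
  have := sqr_ge0 B; have := sqr_ge0 e; have := edot_ge0 (x - w); nra.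
by rewrite -(ler_pXn2r (_ : 0 < 2)%N) ?nnegrE ?(ltW e0).
Qed.

End ConvexFunction.

Section EuclideanTopology.
Context {R : realType} {n : nat}.
Implicit Types (u : nat -> 'rV[R]_n) (c x : 'rV[R]_n).

Lemma sqdistxx x : sqdist x x = 0.
Proof. by rewrite subrr /edot big1 // => i _; rewrite mxE mul0r. Qed.

Lemma nbhs_sqdist_ball {x} {B : set 'rV[R]_n} :
  nbhs x B -> exists2 r, 0 < r & forall w, sqdist w x < r ^+ 2 -> B w.
Proof.
move=> /nbhs_ballP[r /= r0 rB]; exists r => // w wx; apply: rB.
rewrite -ball_normE /ball_ /=; change (mx_norm (x - w) < r).
rewrite mx_normrE; apply: bigmax_lt => // -[i j] _ /=; rewrite ord1 !mxE.
have := le_lt_trans (edot_coord_le (w - x) j) wx; rewrite !mxE -sqrrN opprB => h.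
rewrite ltr_norml; apply/andP; split; nra.
Qed.

Lemma sqdist_ball_nbhs x {d : R} : 0 < d -> nbhs x [set w | sqdist w x < d].
Proof.
move=> d0; have n0 : 0 <= n%:R :> R by [].
pose r := d / (d + n%:R + 1).
have r0 : 0 < r by rewrite divr_gt0 //; lra.
have r1 : r < 1 by rewrite ltr_pdivrMr ?mul1r; lra.
have rE : r * (d + n%:R + 1) = d by rewrite divfK // gt_eqF //; lra.
apply/nbhs_ballP; exists r => // w; rewrite -ball_normE /ball_ /= => xw.
have coord i : `|x ord0 i - w ord0 i| <= r.
  apply/ltW/(le_lt_trans _ xw).
  change (`|x ord0 i - w ord0 i| <= mx_norm (x - w)); rewrite mx_normrE.
  have := @le_bigmax _ _ _ 0 (fun ij : 'I_1 * 'I_n => `|(x - w) ij.1 ij.2|) (ord0, i).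
  by rewrite /= !mxE.
apply: (@le_lt_trans _ _ (\sum_(i < n) r ^+ 2)).
  apply: ler_sum => i _; rewrite !mxE -expr2 -sqrrN opprB -real_normK ?num_real //.
  by rewrite lerXn2r ?nnegrE ?normr_ge0 ?(ltW r0) ?coord.
rewrite sumr_const card_ord -mulr_natl; nra.
Qed.

Lemma sqdist_cvg u x :
  (forall d, 0 < d -> exists N, forall k, (N <= k)%N -> sqdist (u k) x < d) ->
  u @ \oo --> x.
Proof.
move=> ux B /nbhs_sqdist_ball[r r0 rB].
have [N uN] := ux _ (exprn_gt0 2 r0); exists N => // k /= Nk; exact/rB/uN.
Qed.

Lemma cluster_seq_near {u x} {d : R} N : cluster (u @ \oo) x -> 0 < d ->
  exists2 k, (N <= k)%N & sqdist (u k) x < d.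
Proof.
move=> ux d0.
have tail : (u @ \oo) (u @` [set k | (N <= k)%N]) by exists N => // k /= Nk; exists k.
by have [_ [[k Nk <-] ukx]] := ux _ _ tail (sqdist_ball_nbhs x d0); exists k.
Qed.

Lemma cluster_closed {A : set 'rV[R]_n} {u x} :
  closed A -> (forall k, A (u k)) -> cluster (u @ \oo) x -> A x.
Proof.
move=> cA uA ux; apply: cA => B xB; apply: ux xB.
by exists 0%N => // k _; apply: uA.
Qed.

Lemma closed_sqdist_le c (r : R) : closed [set w | sqdist w c <= r].
Proof.
move=> x xcl; apply/ler_addgt0Pr => e e0.
have [d d0 near] := sqdist_near c r e0.
have [w [/= wc wx]] := xcl _ (sqdist_ball_nbhs x d0).
by apply: le_trans (near x w wc _) _; rewrite ?lerD2r // sqdistC.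
Qed.

Lemma cluster_sublevel {g : 'rV[R]_n -> R} {e : nat -> R} {u x} :
  convex_funR g -> (forall k, g (u k) <= e k) -> e @ \oo --> 0 ->
  cluster (u @ \oo) x -> g x <= 0.
Proof.
move=> cg ge e_cvg ux; apply/ler_addgt0Pr => e' e'0; rewrite add0r.
have e2 : 0 < e' / 2 by rewrite divr_gt0.
have [d d0 near] := convex_fun_near_le cg x 0 e2.
have [N _ eN] := (cvgrPdist_lt _ _).1 e_cvg _ e2.
have [k Nk ukx] := cluster_seq_near N ux d0.
have gu : Num.max (g (u k)) 0 <= e' / 2.
  rewrite ge_max (ltW e2) andbT; apply: le_trans (ge k) _.
  by have := eN k Nk; rewrite /= sub0r normrN => /(le_lt_trans (ler_norm _)) /ltW.
have := near x (u k) _ _; rewrite sqdistxx sqdistC => /(_ (lexx 0) (ltW ukx)); lra.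
Qed.

Lemma cvg_subseq_cluster {u} {phi : nat -> nat} {x} :
  (forall l, (phi l < phi l.+1)%N) -> (fun l => u (phi l)) @ \oo --> x ->
  cluster (u @ \oo) x.
Proof.
move=> phi_incr ux A B [N _ uA] xB; have [N' _ uB] := ux _ xB.
have phi_ge l : (l <= phi l)%N by elim: l => // l IH; apply: leq_ltn_trans IH (phi_incr l).
exists (u (phi (maxn N N'))); split.
- by apply: uA; apply: leq_trans (phi_ge _); rewrite leq_maxl.
- by apply: uB; rewrite /= leq_maxr.
Qed.

Lemma bounded_seq_cluster {u c} {r : R} :
  (forall k, sqdist (u k) c <= r) -> exists x, cluster (u @ \oo) x.
Proof.
move=> uc; set s := `|r| + 1.
have box_compact := @rV_compact R n (fun i => `[c ord0 i - s, c ord0 i + s]%classic)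
  (fun i => @segment_compact R _ _).
have [|x [_ ux]] := box_compact (u @ \oo) _; last by exists x.
exists 0%N => // k _ i /=; rewrite in_itv /=.
have := edot_coord_le (u k - c) i; rewrite !mxE => h.
have := uc k; have := ler_norm r; have := normr_ge0 r; rewrite /s => r0 rr ukc.
by apply/andP; split; nra.
Qed.

Lemma cluster_monotone_cvg {u x y} :
  (forall k, sqdist x (u k) <= sqdist x y - sqdist (u k) y) ->
  (forall k, sqdist (u k) y <= sqdist (u k.+1) y) ->
  cluster (u @ \oo) x -> u @ \oo --> x.
Proof.
move=> pyth /nondecreasing_seqP mono ux; apply: sqdist_cvg => d d0.
have d2 : 0 < d / 2 by rewrite divr_gt0.
have [dl dl0 near] := sqdist_near y (sqdist x y) d2.
have [K0 _ uK0] := cluster_seq_near 0 ux dl0.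
exists K0 => k K0k; rewrite sqdistC.
have uK0y : sqdist (u K0) y <= sqdist x y.
  by have := pyth K0; have := edot_ge0 (x - u K0); lra.
have := near x (u K0) uK0y; rewrite sqdistC => /(_ uK0).
have := pyth k; have := mono _ _ K0k; lra.
Qed.

End EuclideanTopology.

Lemma exists_small_increment {R : realType} (s d : nat -> R) {hi dl : R} i0 :
  0 < dl -> (forall i, s i <= hi) -> (forall i, (i0 <= i)%N -> d i <= s i.+1 - s i) ->
  exists2 i, (i0 <= i)%N & d i < dl.
Proof.
move=> dl0 s_hi sd; have [//|large] := pselect (exists2 i, (i0 <= i)%N & d i < dl).
have grow N : N%:R * dl <= s (i0 + N)%N - s i0.
  elim: N => [|N IH]; first by rewrite addn0 mul0r subrr.
  have : dl <= d (i0 + N)%N.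
    by rewrite leNgt; apply/negP => small; apply: large; exists (i0 + N)%N; rewrite ?leq_addr.
  have := sd _ (leq_addr N i0); rewrite addnS -[N.+1]addn1 natrD mulrDl mul1r; lra.
have gap0 : 0 <= (hi - s i0) / dl by rewrite divr_ge0 ?subr_ge0 ?s_hi ?ltW.
have := archi_boundP gap0; set N := Num.Def.archi_bound _; rewrite ltr_pdivrMr // => N_large.
have := grow N; have := s_hi (i0 + N)%N; lra.
Qed.

Lemma finite_uniform_gt0 {R : realDomainType} {m} (P : 'I_m -> R -> Prop) :
  (forall j r s, 0 < s <= r -> P j r -> P j s) ->
  (forall j, exists2 r, 0 < r & P j r) -> exists2 r, 0 < r & forall j, P j r.
Proof.
move=> P_down P_ex.
have /choice[r rP] : forall j, exists r, 0 < r /\ P j r.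
  by move=> j; have [r r0 Pr] := P_ex j; exists r.
have r_gt0 : 0 < \big[Num.min/1]_j r j by apply: lt_bigmin => // j _; case: (rP j).
exists (\big[Num.min/1]_j r j) => // j; case: (rP j) => rj0 Prj.
by apply: P_down Prj; rewrite r_gt0 bigmin_le.
Qed.

Lemma hitting_times {P : nat -> Prop} {c : nat -> nat} :
  c 0%N = 0%N -> (forall i, P i -> c i.+1 = (c i).+1) -> (forall i, ~ P i -> c i.+1 = c i) ->
  (forall i0, exists2 i, (i0 <= i)%N & P i) ->
  exists t : nat -> nat, (forall k, (t k < t k.+1)%N) /\ (forall k, P (t k) /\ c (t k) = k).
Proof.
move=> c0 cP cNP P_often.
have first_hit i0 : exists i, [/\ (i0 <= i)%N, P i & c i = c i0].
  have [i i0i] := P_often i0; rewrite -(subnKC i0i); move: (i - i0)%N => d.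
  elim: d i0 {i i0i} => [|d IH] i0; first by rewrite addn0 => Pi0; exists i0.
  have [Pi0 _|NPi0] := pselect (P i0); first by exists i0.
  rewrite addnS -addSn => /IH[i [i0i Pi ci]].
  by exists i; split => //; [exact: ltnW | rewrite ci cNP].
have [next nextP] := choice first_hit.
pose fix t k := if k is k'.+1 then next (t k').+1 else next 0%N.
exists t; split => [k|]; first by case: (nextP (t k).+1).
elim=> [|k [Ptk ctk]]; first by case: (nextP 0%N) => _ ? ->.
by case: (nextP (t k).+1) => _ ? /= ->; rewrite cP // ctk.
Qed.

(* The point [v + (r/2) a] lies in [S], so [v] is at least [r/2] behind the
   hyperplane through [z] orthogonal to [a]; as [z = (1 - t) v + t yi], the point
   [yi] is at least [(1 - t) r / 2] in front of it while [yn] is behind it, and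
   [|yi - z| = (1 - t) |yi - v|]. *)
Lemma open_seg_cut_sqdist_le {R : realType} {n} {S : set 'rV[R]_n}
    {v yi yn z a : 'rV[R]_n} {r : R} :
  0 < r -> (forall u, sqdist u v < r ^+ 2 -> S u) ->
  open_seg v yi z -> W1 z S a -> edot a (yn - z) <= 0 ->
  sqdist yi z * r ^+ 2 <= 4 * sqdist yi yn * sqdist yi v.
Proof.
move=> r0 ball_S [t [/andP[t0 t1] ->]] [a_unit a_normal] a_yn.
have a1 : edot a a = 1 by rewrite -enorm_sqr a_unit expr1n.
have S_far : S (v + (r / 2) *: a).
  apply: ball_S; have -> : v + (r / 2) *: a - v = (r / 2) *: a by row_ring.
  by rewrite edot_sqrZ a1 mulr1; nra.
have a_v := a_normal _ S_far.
have far_z : v + (r / 2) *: a - ((1 - t) *: v + t *: yi) = (r / 2) *: a - t *: (yi - v).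
  by row_ring.
have yn_z : yn - ((1 - t) *: v + t *: yi) = (yn - yi) + (1 - t) *: (yi - v) by row_ring.
rewrite far_z edotBr !edotZr a1 in a_v; rewrite yn_z edotDr edotZr in a_yn.
have -> : yi - ((1 - t) *: v + t *: yi) = (1 - t) *: (yi - v) by row_ring.
rewrite edot_sqrZ.
have := edot_unit_sqr_le (yi - yn) a1.
have -> : edot a (yi - yn) = - edot a (yn - yi) by rewrite -edotNr opprB.
move: a_v a_yn; set av := edot a (yi - v); set s := edot a (yn - yi).
set dd := sqdist yi yn => a_v a_yn s_dd.
have hD := edot_ge0 (yi - v).
have av0 : 0 < av by nra.
have s0 : 0 <= - s by nra.
have k1 : (1 - t) * r <= 2 * (- s) by nra.
have k2 : ((1 - t) * r) ^+ 2 <= (2 * (- s)) ^+ 2.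
  by rewrite lerXn2r ?nnegrE //; apply: mulr_ge0; lra.
have k3 : (1 - t) ^+ 2 * r ^+ 2 <= 4 * dd.
  by apply: le_trans (_ : (2 * (- s)) ^+ 2 <= _); [rewrite -exprMn | rewrite exprMn sqrrN; nra].
have := ler_wpM2r hD k3; nra.
Qed.

Section Method13.
Context {R : realType} {n m : nat} {D2 : set 'rV[R]_n} {f : 'I_m -> 'rV[R]_n -> R}.
Context {y : 'rV[R]_n} {v : 'I_m -> 'rV[R]_n} {eps : nat -> R} {q : R}.
Context {yy : nat -> 'rV[R]_n} {M Q : nat -> set 'rV[R]_n} {kc : nat -> nat}.
Context {z : nat -> 'I_m -> 'rV[R]_n} {qq : nat -> 'I_m -> R} {jj : nat -> 'I_m}.
Context {a : nat -> 'rV[R]_n} {pstar : 'rV[R]_n}.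

Hypothesis closed_D2 : closed D2.
Hypothesis convex_D2 : convex_setR D2.
Hypothesis convex_f : forall j, convex_funR (f j).
Hypothesis pstar_proj : is_proj y (Dprime f `&` D2) pstar.
Hypothesis v_interior : forall j, interior (sublevel (f j)) (v j).
Hypothesis eps_gt0 : forall k, 0 < eps k.
Hypothesis eps_cvg : eps @ \oo --> (0 : R).
Hypothesis kc0 : kc 0%N = 0%N.
Hypothesis M0 : M 0%N = setT.
Hypothesis yy0 : is_proj y D2 (yy 0%N).
Hypothesis step2_keep : forall i, ~ Dprime_eps f (eps (kc i)) (yy i) ->
  Q i = M i /\ kc i.+1 = kc i.
Hypothesis step2_reset : forall i, Dprime_eps f (eps (kc i)) (yy i) ->
  Q i = setT /\ kc i.+1 = (kc i).+1.
Hypothesis step3 : forall i j, ~ sublevel (f j) (yy i) ->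
  [/\ open_seg (v j) (yy i) (z i j), ~ interior (sublevel (f j)) (z i j),
      1 <= qq i j <= q & sublevel (f j) (yy i + qq i j *: (z i j - yy i))].
Hypothesis step4 : forall i, ~ sublevel (f (jj i)) (yy i) /\
  forall j, ~ sublevel (f j) (yy i) -> enorm (yy i - z i j) <= enorm (yy i - z i (jj i)).
Hypothesis step5 : forall i, W1 (z i (jj i)) (sublevel (f (jj i))) (a i).
Hypothesis M_succ : forall i, M i.+1 = Q i `&` [set x | edot (a i) (x - z i (jj i)) <= 0].
Hypothesis yy_succ : forall i, is_proj y (M i.+1 `&` D2) (yy i.+1).

Local Notation reset i := (Dprime_eps f (eps (kc i)) (yy i)).

Lemma Q_M_or_setT i : Q i = M i \/ Q i = setT.
Proof.
have [ri|nri] := pselect (reset i).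
  by right; exact: (step2_reset _ ri).1.
by left; exact: (step2_keep _ nri).1.
Qed.

Lemma convex_M i : convex_setR (M i).
Proof.
elim: i => [|i IH]; first by rewrite M0.
rewrite M_succ; case: (Q_M_or_setT i) => ->.
  exact: convex_setI IH (convex_halfspace _ _).
by rewrite setTI; exact: convex_halfspace.
Qed.

Lemma Dprime_sub_M i : Dprime f `<=` M i.
Proof.
elim: i => [|i IH] x Dx; first by rewrite M0.
rewrite M_succ; split; first by case: (Q_M_or_setT i) => ->; [exact: IH|].
by case: (step5 i) => _; apply; exact: Dx.
Qed.

Lemma yy_proj i : is_proj y (M i `&` D2) (yy i).
Proof. by case: i => [|i]; [rewrite M0 setTI | exact: yy_succ]. Qed.

Lemma pstar_in_MD2 i : (M i `&` D2) pstar.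
Proof. by case: pstar_proj => -[Dp D2p] _; split => //; exact: Dprime_sub_M. Qed.

Lemma yy_sqdist_le i : sqdist (yy i) y <= sqdist pstar y.
Proof. exact: is_proj_sqdist_le (yy_proj i) (pstar_in_MD2 i). Qed.

Lemma yy_step_le i : ~ reset i ->
  sqdist (yy i.+1) (yy i) <= sqdist (yy i.+1) y - sqdist (yy i) y.
Proof.
move=> nri; apply: is_proj_pythagoras (convex_setI (convex_M i) convex_D2) (yy_proj i) _.
have [[] ] := yy_proj i.+1; rewrite M_succ (step2_keep _ nri).1 => -[Myy _] D2yy _.
by split.
Qed.

Lemma cut_point_sqdist_le : exists2 K, 0 <= K &
  forall i, sqdist (yy i) (z i (jj i)) <= K * sqdist (yy i.+1) (yy i).
Proof.
have [r r0 ball_in] : exists2 r, 0 < r &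
    forall j u, sqdist u (v j) < r ^+ 2 -> sublevel (f j) u.
  apply: (finite_uniform_gt0 (fun j r =>
    forall u, sqdist u (v j) < r ^+ 2 -> sublevel (f j) u)).
    by move=> j r s /andP[s0 sr] ball_r u us; apply: ball_r; nra.
  by move=> j; exact: nbhs_sqdist_ball (v_interior j).
set V := \big[Num.max/0]_j sqdist y (v j).
set rho := 2 * sqdist pstar y + 2 * V.
have V0 : 0 <= V by exact: bigmax_ge_id.
have rho0 : 0 <= rho by have := edot_ge0 (pstar - y); rewrite /rho; lra.
have yy_v i j : sqdist (yy i) (v j) <= rho.
  have y_v : sqdist y (v j) <= V by exact: le_bigmax.
  apply: le_trans (sqdist_triangle _ y _) _; have := yy_sqdist_le i; rewrite /rho; lra.
have r2 : 0 < r ^+ 2 by rewrite exprn_gt0.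
exists (4 * rho / r ^+ 2) => [|i]; first by apply: divr_ge0; [exact: mulr_ge0 | exact: ltW].
have [seg _ _ _] := step3 _ _ (step4 i).1.
have cut : edot (a i) (yy i.+1 - z i (jj i)) <= 0.
  by have [[]] := yy_proj i.+1; rewrite M_succ => -[_ ?].
have cut_le := open_seg_cut_sqdist_le r0 (ball_in (jj i)) seg (step5 i) cut.
rewrite -(ler_pM2r r2) (sqdistC (yy i.+1)); apply: le_trans cut_le _.
have -> : 4 * rho / r ^+ 2 * sqdist (yy i) (yy i.+1) * r ^+ 2 =
    4 * sqdist (yy i) (yy i.+1) * rho by field; rewrite gt_eqF.
by rewrite ler_wpM2l ?mulr_ge0 ?edot_ge0.
Qed.

(* Every violated constraint [j] has a point [y_i + q_i^j (z_i^j - y_i)] of [D_j]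
   within [q |y_i - z_i^{j_i}|], which is small by the cut estimate. *)
Lemma small_step_near_Dprime {e : R} : 0 < e -> exists2 d, 0 < d &
  forall i, sqdist (yy i.+1) (yy i) < d -> Dprime_eps f e (yy i).
Proof.
move=> e0; have [K K0 cutK] := cut_point_sqdist_le.
have [d d0 near] : exists2 d, 0 < d & forall j x w,
    sqdist x y <= sqdist pstar y -> sqdist x w <= d -> f j x <= Num.max (f j w) 0 + e.
  apply: (finite_uniform_gt0 (fun j d => forall x w,
    sqdist x y <= sqdist pstar y -> sqdist x w <= d -> f j x <= Num.max (f j w) 0 + e)).
    by move=> j d d' /andP[_ d'd] near_d x w xy xw; apply: near_d (le_trans xw d'd).
  by move=> j; exact: (convex_fun_near_le (convex_f j) y (sqdist pstar y) e0).
have qK0 : 0 < q ^+ 2 * K + 1 by have := sqr_ge0 q; nra.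
exists (d / (q ^+ 2 * K + 1)) => [|i step j]; first by rewrite divr_gt0.
have [fj_le0|fj_gt0] := pselect (sublevel (f j) (yy i)).
  by apply: le_trans fj_le0 (ltW e0).
have [_ _ /andP[qq1 qqq] w_in] := step3 _ _ fj_gt0.
set w := yy i + qq i j *: (z i j - yy i) in w_in.
have zj : sqdist (yy i) (z i j) <= sqdist (yy i) (z i (jj i)).
  by rewrite -enorm_leE; exact: (step4 i).2.
have yw : sqdist (yy i) w <= d.
  have -> : yy i - w = qq i j *: (yy i - z i j) by rewrite /w; row_ring.
  rewrite edot_sqrZ; rewrite ltr_pdivlMr // in step.
  have := cutK i; have := edot_ge0 (yy i - z i j); have := edot_ge0 (yy i.+1 - yy i).
  have qq2 : qq i j ^+ 2 <= q ^+ 2 by rewrite lerXn2r ?nnegrE //; lra.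
  nra.
have := near j (yy i) w (yy_sqdist_le i) yw.
by rewrite (max_idPr w_in) add0r.
Qed.

Lemma reset_infinitely_often i0 : exists2 i, (i0 <= i)%N & reset i.
Proof.
have [//|never] := pselect (exists2 i, (i0 <= i)%N & reset i).
have keep i : (i0 <= i)%N -> ~ reset i by move=> i0i ri; apply: never; exists i.
have kc_const i : (i0 <= i)%N -> kc i = kc i0.
  elim: i => [|i IH]; first by rewrite leqn0 => /eqP ->.
  rewrite leq_eqVlt ltnS => /orP[/eqP -> // | i0i].
  by rewrite (step2_keep _ (keep i i0i)).2 IH.
have [d d0 near] := small_step_near_Dprime (eps_gt0 (kc i0)).
have [i i0i small] := exists_small_increment (fun i => sqdist (yy i) y)
  (fun i => sqdist (yy i.+1) (yy i)) i0 d0 yy_sqdist_le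
  (fun i i0i => yy_step_le i (keep i i0i)).
by exists i; rewrite ?kc_const //; exact: near.
Qed.

Lemma method13_convergence : exists ik : nat -> nat,
    (forall k, (ik k < ik k.+1)%N) /\
    (forall k, Dprime_eps f (eps (kc (ik k))) (yy (ik k)) /\ kc (ik k) = k) /\
    (forall x : 'rV[R]_n, (exists phi : nat -> nat,
         (forall l, (phi l < phi l.+1)%N) /\
         (fun l => yy (ik (phi l))) @ \oo --> x) -> x = pstar) /\
    ((forall k, enorm (yy (ik k) - y) <= enorm (yy (ik k.+1) - y)) ->
       (fun k => yy (ik k)) @ \oo --> pstar).
Proof.
have [ik [ik_incr ik_reset]] := hitting_times kc0 (fun i ri => (step2_reset _ ri).2)
  (fun i nri => (step2_keep _ nri).2) reset_infinitely_often.
pose p k := yy (ik k).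
have p_D2 k : D2 (p k) by case: (yy_proj (ik k)) => -[].
have p_bound k : sqdist (p k) y <= sqdist pstar y := yy_sqdist_le (ik k).
have p_eps k j : f j (p k) <= eps k by case: (ik_reset k) => rk ck; move: (rk j); rewrite ck.
have limit_pt x : cluster (p @ \oo) x -> x = pstar.
  move=> px; apply: is_proj_eq (convex_setI (convex_Dprime_eps convex_f) convex_D2)
    pstar_proj _ (cluster_closed (closed_sqdist_le y _) p_bound px).
  split; last exact: cluster_closed closed_D2 p_D2 px.
  by move=> j; apply: cluster_sublevel (convex_f j) (p_eps^~ j) eps_cvg px.
exists ik; do !split => //.
  by move=> x [phi [phi_incr /(cvg_subseq_cluster phi_incr)/limit_pt]].
move=> mono; have [x px] := bounded_seq_cluster p_bound.
have /limit_pt x_eq := px; rewrite x_eq in px; apply: cluster_monotone_cvg px => k.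
  exact: is_proj_pythagoras (convex_setI (convex_M _) convex_D2) (yy_proj _) (pstar_in_MD2 _).
by rewrite -enorm_leE; exact: mono.
Qed.

End Method13.

Theorem theorem1p3p1
  (R : realType) (n m : nat)
  (D2 : set 'rV[R]_n) (f : 'I_m -> 'rV[R]_n -> R) (y : 'rV[R]_n)
  (* data of Method 1.3 *)
  (v : 'I_m -> 'rV[R]_n) (eps : nat -> R) (q : R)
  (* a non-terminating run of Method 1.3 *)
  (yy : nat -> 'rV[R]_n) (M Q : nat -> set 'rV[R]_n) (kc : nat -> nat)
  (z : nat -> 'I_m -> 'rV[R]_n) (qq : nat -> 'I_m -> R)
  (jj : nat -> 'I_m) (a : nat -> 'rV[R]_n)
  (pstar : 'rV[R]_n) :
  (* standing assumptions *)
  closed D2 -> convex_setR D2 ->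
  (forall j, convex_funR (f j)) ->
  (forall j, exists x, interior (sublevel (f j)) x) ->
  (exists x, (Dprime f `&` D2) x) ->
  (* p* = Pr(y, D) *)
  is_proj y (Dprime f `&` D2) pstar ->
  (* parameters *)
  (forall j, interior (sublevel (f j)) (v j)) ->
  (forall k, 0 < eps k) -> eps @ \oo --> (0 : R) ->
  1 <= q ->
  (* initialisation: k = i = 0, M_0 = R^n, y_0 = Pr(y, D'') *)
  kc 0%N = 0%N -> M 0%N = setT -> is_proj y D2 (yy 0%N) ->
  (* Step 1, never stops: J_i is nonempty *)
  (forall i, exists j, ~ sublevel (f j) (yy i)) ->
  (* Step 2 *)
  (forall i, ~ Dprime_eps f (eps (kc i)) (yy i) ->
     Q i = M i /\ kc i.+1 = kc i) ->
  (forall i, Dprime_eps f (eps (kc i)) (yy i) ->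
     Q i = setT /\ kc i.+1 = (kc i).+1) ->
  (* Step 3 *)
  (forall i j, ~ sublevel (f j) (yy i) ->
     [/\ open_seg (v j) (yy i) (z i j), ~ interior (sublevel (f j)) (z i j),
         1 <= qq i j <= q &
         sublevel (f j) (yy i + qq i j *: (z i j - yy i))]) ->
  (forall i j, sublevel (f j) (yy i) -> z i j = yy i) ->
  (* Step 4 *)
  (forall i, ~ sublevel (f (jj i)) (yy i) /\
     forall j, ~ sublevel (f j) (yy i) ->
       enorm (yy i - z i j) <= enorm (yy i - z i (jj i))) ->
  (* Step 5 *)
  (forall i, W1 (z i (jj i)) (sublevel (f (jj i))) (a i)) ->
  (forall i, M i.+1 = Q i `&` [set x | edot (a i) (x - z i (jj i)) <= 0]) ->
  (* Step 6 *)
  (forall i, is_proj y (M i.+1 `&` D2) (yy i.+1)) ->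
  (* conclusion: the points p_k = y_{i_k} are defined for every k in K, every
     limit point of (p_k) is p*, and under monotonicity p_k -> p* *)
  exists ik : nat -> nat,
    (forall k, (ik k < ik k.+1)%N) /\
    (forall k, Dprime_eps f (eps (kc (ik k))) (yy (ik k)) /\ kc (ik k) = k) /\
    (forall x : 'rV[R]_n, (exists phi : nat -> nat,
         (forall l, (phi l < phi l.+1)%N) /\
         (fun l => yy (ik (phi l))) @ \oo --> x) -> x = pstar) /\
    ((forall k, enorm (yy (ik k) - y) <= enorm (yy (ik k.+1) - y)) ->
       (fun k => yy (ik k)) @ \oo --> pstar).
Proof.
move=> closed_D2 convex_D2 convex_f _ _ pstar_proj v_interior eps_gt0 eps_cvg _ kc0 M0 yy0 _.
move=> step2_keep step2_reset step3 _ step4 step5 M_succ yy_succ.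
exact: (method13_convergence closed_D2 convex_D2 convex_f pstar_proj v_interior eps_gt0
  eps_cvg kc0 M0 yy0 step2_keep step2_reset step3 step4 step5 M_succ yy_succ).
Qed.
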